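(* Let $\mathbf{A}\in\mathbb{R}^{n\times n}$ be symmetric positive definite, and let $\mathbf{A}_\ell=\mathbf{A}+\sum_{k=1}^{\ell}\mathbf{P}_k\mathbf{E}_k\mathbf{P}_k$, where each $\mathbf{E}_k\in\mathbb{R}^{n\times n}$ is symmetric and each $\mathbf{P}_k$ is an orthogonal projection matrix. Suppose $$\sum_{k=1}^{\ell}\|\mathbf{E}_k\|_2\,\|\mathbf{P}_k\mathbf{A}^{-1}\mathbf{P}_k\|_2\le\mu<1.$$ Then $\mathbf{A}_\ell$ is symmetric positive definite and the condition number satisfies $$\kappa\!\left(\mathbf{A}_\ell^{-1/2}\mathbf{A}\,\mathbf{A}_\ell^{-1/2}\right)\le\frac{1+\mu}{1-\mu}.$$
   Context: For an SPD matrix $\mathbf{X}=\mathbf{V}\mathbf{\Lambda}\mathbf{V}^T$ (eigendecomposition), $\mathbf{X}^{1/2}=\mathbf{V}\mathbf{\Lambda}^{1/2}\mathbf{V}^T$ and $\mathbf{X}^{-1/2}$ is its inverse; $\kappa$ denotes the 2-norm condition number (ratio of largest to smallest eigenvalue for an SPD matrix). *)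

(* Reals are modelled by an arbitrary real closed field R
   (needed for square roots). *)
From HB Require Import structures.
From mathcomp Require Import all_boot all_order all_algebra.
From Stdlib Require Import ClassicalEpsilon.
Set Implicit Arguments. Unset Strict Implicit. Unset Printing Implicit Defensive.
Import Order.TTheory GRing.Theory Num.Theory.
Local Open Scope ring_scope.

Section Defs.
Variable R : rcfType.
Variable n : nat.

Definition symm_mx (A : 'M[R]_n) : Prop := A^T = A.

Definition spd (A : 'M[R]_n) : Prop :=
  symm_mx A /\ forall x : 'cV[R]_n, x != 0 -> 0 < (x^T *m A *m x) 0 0.

Definition orth_proj (P : 'M[R]_n) : Prop := P^T = P /\ P *m P = P.

Definition vnorm (x : 'cV[R]_n) : R := Num.sqrt (\sum_i (x i 0) ^+ 2).

Definition is_norm2 (A : 'M[R]_n) (c : R) : Prop :=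
  0 <= c /\ (forall x, vnorm (A *m x) <= c * vnorm x) /\
  (forall d, 0 <= d -> (forall x, vnorm (A *m x) <= d * vnorm x) -> c <= d).

Definition norm2 (A : 'M[R]_n) : R := epsilon (inhabits 0) (is_norm2 A).

Definition kappa (A : 'M[R]_n) : R := norm2 A * norm2 (invmx A).

Definition is_sqrtm (X S : 'M[R]_n) : Prop :=
  exists (V : 'M[R]_n) (d : 'rV[R]_n),
    V^T *m V = 1%:M /\ (forall i, 0 <= d 0 i) /\
    X = V *m diag_mx d *m V^T /\
    S = V *m diag_mx (map_mx Num.sqrt d) *m V^T.

Definition sqrtm (X : 'M[R]_n) : 'M[R]_n := epsilon (inhabits 0) (is_sqrtm X).

Definition isqrtm (X : 'M[R]_n) : 'M[R]_n := invmx (sqrtm X).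

End Defs.

(* Let A be SPD and A_l = A + sum_k P_k E_k P_k with E_k symmetric and P_k
   orthogonal projections, where sum_k |E_k| |P_k A^-1 P_k| <= mu < 1.
   The proof only looks at the quadratic forms x^T X x.
   1. For an orthogonal projection P, |P x|^2 <= |P A^-1 P| x^T A x
      (Cauchy-Schwarz for the inner product defined by A).  Hence each term
      satisfies |x^T P E P x| <= |E| |P A^-1 P| x^T A x, and summing gives
      (1 - mu) x^T A x <= x^T A_l x <= (1 + mu) x^T A x.
   2. The lower bound makes A_l SPD.  For T = A_l^{-1/2} and N = T A T the
      substitution x = T y turns the two bounds into
      (1 - mu) y^T N y <= y^T y <= (1 + mu) y^T N y,
      so |N| <= 1/(1 - mu) and |N^-1| <= 1 + mu, whence the bound on kappa. *)

From HB Require Import structures.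
From mathcomp Require Import all_boot all_order all_algebra.
From mathcomp Require Import ring lra.
From mathcomp Require Import complex.
From Stdlib Require Import ClassicalEpsilon.
Set Implicit Arguments. Unset Strict Implicit. Unset Printing Implicit Defensive.
Import Order.TTheory GRing.Theory Num.Theory.
Local Open Scope ring_scope.

Section InnerProduct.
Variable R : rcfType.

Definition dot m (x y : 'cV[R]_m) : R := (x^T *m y) 0 0.

Definition psd_form m (N : 'M[R]_m) : Prop := forall z, 0 <= dot z (N *m z).

Lemma dotE m (x y : 'cV[R]_m) : dot x y = \sum_i x i 0 * y i 0.
Proof. by rewrite /dot mxE; apply: eq_bigr => i _; rewrite mxE. Qed.

Lemma dotC m (x y : 'cV[R]_m) : dot x y = dot y x.
Proof. by rewrite !dotE; apply: eq_bigr => i _; rewrite mulrC. Qed.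

Lemma dot_ge0 m (x : 'cV[R]_m) : 0 <= dot x x.
Proof. by rewrite dotE; apply: sumr_ge0 => i _; rewrite -expr2 sqr_ge0. Qed.

Lemma dot_eq0 m (x : 'cV[R]_m) : dot x x = 0 -> x = 0.
Proof.
rewrite dotE => x0; apply/matrixP => i j; rewrite ord1 mxE.
have sq0 : \sum_i x i 0 ^+ 2 = 0.
  by rewrite -[RHS]x0; apply: eq_bigr => k _; rewrite expr2.
have := @psumr_eq0P _ _ predT (fun k => x k 0 ^+ 2) (fun k _ => sqr_ge0 _) sq0 i isT.
by move/eqP; rewrite sqrf_eq0 => /eqP.
Qed.

Lemma dotDl m (x y z : 'cV[R]_m) : dot (x + y) z = dot x z + dot y z.
Proof. by rewrite !dotE -big_split; apply: eq_bigr => i _; rewrite !mxE mulrDl. Qed.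

Lemma dotDr m (x y z : 'cV[R]_m) : dot z (x + y) = dot z x + dot z y.
Proof. by rewrite dotC dotDl !(dotC z). Qed.

Lemma dotNl m (x z : 'cV[R]_m) : dot (- x) z = - dot x z.
Proof. by rewrite !dotE -sumrN; apply: eq_bigr => i _; rewrite !mxE mulNr. Qed.

Lemma dotBl m (x y z : 'cV[R]_m) : dot (x - y) z = dot x z - dot y z.
Proof. by rewrite dotDl dotNl. Qed.

Lemma dotBr m (x y z : 'cV[R]_m) : dot z (x - y) = dot z x - dot z y.
Proof. by rewrite dotC dotBl !(dotC z). Qed.

Lemma dotZl m a (x z : 'cV[R]_m) : dot (a *: x) z = a * dot x z.
Proof. by rewrite !dotE mulr_sumr; apply: eq_bigr => i _; rewrite !mxE mulrA. Qed.

Lemma dotZr m a (x z : 'cV[R]_m) : dot z (a *: x) = a * dot z x.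
Proof. by rewrite dotC dotZl dotC. Qed.

Lemma dot_sumr m (I : finType) x (f : I -> 'cV[R]_m) :
  dot x (\sum_k f k) = \sum_k dot x (f k).
Proof.
rewrite dotE; under eq_bigr do rewrite summxE mulr_sumr.
by rewrite exchange_big; apply: eq_bigr => k _; rewrite dotE.
Qed.

Lemma dotTr m (N : 'M[R]_m) x y : dot x (N *m y) = dot (N^T *m x) y.
Proof. by rewrite /dot trmx_mul trmxK mulmxA. Qed.

Lemma dot_delta m (i : 'I_m) (x : 'cV[R]_m) : dot (delta_mx i 0) x = x i 0.
Proof.
rewrite dotE (bigD1 i) //= big1 ?addr0; first by rewrite mxE !eqxx mul1r.
by move=> j /negbTE ji; rewrite mxE ji mul0r.
Qed.

Lemma dot0r m (x : 'cV[R]_m) : dot x 0 = 0.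
Proof. by rewrite dotE big1 // => i _; rewrite mxE mulr0. Qed.

Lemma dot_delta1 m (i : 'I_m) : dot (delta_mx i 0) (delta_mx i 0) = 1 :> R.
Proof. by rewrite dot_delta mxE !eqxx. Qed.

Lemma dot_orth m (V : 'M[R]_m) x y :
  V^T *m V = 1%:M -> dot (V *m x) (V *m y) = dot x y.
Proof. by move=> VV; rewrite dotTr mulmxA VV mul1mx. Qed.

End InnerProduct.

Section CauchySchwarz.
Variable R : rcfType.

Lemma quad_disc (a b c : R) : 0 <= c ->
  (forall t, 0 <= a + 2 * t * b + t ^+ 2 * c) -> b ^+ 2 <= a * c.
Proof.
move=> c0 nonneg; have [c_eq0|c_neq0] := eqVneq c 0.
  have [-> | b_neq0] := eqVneq b 0; first by rewrite c_eq0 expr0n mulr0.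
  have := nonneg (- (a + 1) / (2 * b)); rewrite c_eq0.
  have -> : a + 2 * (- (a + 1) / (2 * b)) * b + (- (a + 1) / (2 * b)) ^+ 2 * 0 = -1.
    by field; rewrite b_neq0.
  by rewrite ler0N1.
have c_gt0 : 0 < c by rewrite lt_def c_neq0.
have := nonneg (- b / c).
have -> : a + 2 * (- b / c) * b + (- b / c) ^+ 2 * c = (a * c - b ^+ 2) / c by field.
by rewrite ler_pdivlMr // mul0r subr_ge0.
Qed.

Lemma cs_form m (B : 'M[R]_m) x y : B^T = B -> psd_form B ->
  dot x (B *m y) ^+ 2 <= dot x (B *m x) * dot y (B *m y).
Proof.
move=> sB psdB; apply: quad_disc => // t.
have := psdB (x + t *: y).
have sym : dot y (B *m x) = dot x (B *m y) by rewrite dotTr sB dotC.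
rewrite mulmxDr -scalemxAr !dotDl !dotDr !dotZl !dotZr sym.
move=> /le_trans; apply; rewrite le_eqVlt; apply/orP; left; apply/eqP; ring.
Qed.

Lemma cs m (x y : 'cV[R]_m) : dot x y ^+ 2 <= dot x x * dot y y.
Proof.
have psd1 : psd_form (1%:M : 'M[R]_m) by move=> z; rewrite mul1mx dot_ge0.
by have := cs_form x y (trmx1 _ _) psd1; rewrite !mul1mx.
Qed.

Lemma sqr_le_cancel (s c q : R) : 0 <= s -> 0 <= c -> 0 <= q ->
  s ^+ 2 <= c * s * q -> s <= c * q.
Proof.
move=> s0 c0 q0 le_sq; have [-> | s_neq0] := eqVneq s 0; first by rewrite mulr_ge0.
have s_gt0 : 0 < s by rewrite lt_def s_neq0.
by rewrite -(ler_pM2r s_gt0) -expr2 (le_trans le_sq) // mulrAC.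
Qed.

End CauchySchwarz.

Section Spectral.
Variable R : rcfType.

Lemma sym_eigenvalue_conj n (A : 'M[R]_n) (z : R[i]) :
  A^T = A -> eigenvalue (map_mx (real_complex R) A) z -> z = conjc z.
Proof.
move=> sA /eigenvalueP [v Hv vn0].
pose AC := map_mx (real_complex R) A.
pose w := map_mx (@conjc R) v.
have ACt : AC^T = AC by rewrite /AC map_trmx sA.
have Hw : w *m AC = conjc z *: w.
  have ACc : map_mx (@conjc R) AC = AC.
    by apply/matrixP => i j; rewrite !mxE conjc_real.
  by rewrite -ACc /w -map_mxM Hv; apply/matrixP => i j; rewrite !mxE rmorphM.
pose t := (v *m w^T) 0 0.
have t_neq0 : t != 0.
  rewrite /t mxE; apply/negP => /eqP t0.
  have vw_ge0 (i : 'I_n) : true -> 0 <= v 0 i * w^T i 0.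
    by move=> _; rewrite !mxE; apply: mulcJ_ge0.
  have vw0 := psumr_eq0P vw_ge0 t0.
  move/negP: vn0; apply; apply/eqP/rowP => i; rewrite mxE.
  have := vw0 i isT; rewrite !mxE => /eqP.
  by rewrite mulf_eq0 conjc_eq0 orbb => /eqP.
have vAw_z : (v *m AC *m w^T) 0 0 = z * t by rewrite Hv -scalemxAl mxE.
have vAw_conj : (v *m AC *m w^T) 0 0 = conjc z * t.
  have tr1 (M : 'M[R[i]]_1) : M 0 0 = M^T 0 0 by rewrite mxE.
  rewrite tr1 !trmx_mul trmxK ACt mulmxA Hw -scalemxAl mxE.
  by rewrite /t tr1 trmx_mul trmxK.
by apply: (mulIf t_neq0); rewrite -vAw_z -vAw_conj.
Qed.

Lemma selfconj_real (c : R[i]) : c = conjc c -> c = real_complex R (complex.Re c).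
Proof.
case: c => a b /= [] b_eq; rewrite -complexr0 /=; congr Complex.
by apply/eqP; rewrite -[b == 0](mulrn_eq0 b 2) mulr2n {2}b_eq subrr.
Qed.

Lemma sym_real_eigenvalue n (A : 'M[R]_n.+1) : A^T = A ->
  exists a : R, exists2 v : 'rV[R]_n.+1, v *m A = a *: v & v != 0.
Proof.
move=> sA; pose AC := map_mx (real_complex R) A.
have [z zeig] := @eigenvalue_closed R[i] _ AC (ltn0Sn n).
have zR := selfconj_real (sym_eigenvalue_conj sA zeig).
exists (complex.Re z); apply/eigenvalueP.
move: zeig; rewrite eigenvalue_root_char /AC -map_char_poly zR fmorph_root.
by rewrite -eigenvalue_root_char.
Qed.

Lemma sym_unit_eigenvector n (A : 'M[R]_n.+1) : A^T = A ->
  exists a : R, exists2 u : 'cV[R]_n.+1, dot u u = 1 & A *m u = a *: u.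
Proof.
move=> sA; have [a [v Hv vn0]] := sym_real_eigenvalue sA.
have Av : A *m v^T = a *: v^T by rewrite -{1}sA -trmx_mul Hv linearZ.
pose s := dot v^T v^T.
have s_gt0 : 0 < s.
  rewrite lt_def dot_ge0 andbT; apply: contra vn0 => /eqP /dot_eq0 v0.
  by rewrite -(trmxK v) v0 trmx0.
exists a, ((Num.sqrt s)^-1 *: v^T).
  rewrite dotZl dotZr -/s mulrA -expr2 exprVn sqr_sqrtr ?ltW // mulVf //.
  by rewrite gt_eqF.
by rewrite -scalemxAr Av !scalerA mulrC.
Qed.

Lemma householder n (u : 'cV[R]_n.+1) : dot u u = 1 ->
  exists Q : 'M[R]_n.+1, Q^T *m Q = 1%:M /\ Q *m delta_mx 0 0 = u.
Proof.
move=> uu; pose e : 'cV[R]_n.+1 := delta_mx 0 0.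
pose w := u - e; pose c := dot w w.
have ue : dot u e = u 0 0 by rewrite dotC dot_delta.
have cE : c = 2 - 2 * u 0 0.
  by rewrite /c /w dotBl !dotBr uu dot_delta1 ue dotC ue; ring.
have [c0 | c_neq0] := eqVneq c 0.
  exists 1%:M; rewrite trmx1 mulmx1 mul1mx; split => //.
  by have /eqP := dot_eq0 c0; rewrite subr_eq0 => /eqP.
pose Q := 1%:M - (2 / c) *: (w *m w^T).
have QT : Q^T = Q by rewrite /Q linearB /= trmx1 linearZ /= trmx_mul trmxK.
have ww : w^T *m w = c%:M by rewrite [LHS]mx11_scalar.
exists Q; rewrite QT; split.
  rewrite /Q mulmxBl !mulmxBr !mul1mx !mulmx1 -!scalemxAl -!scalemxAr scalerA.
  rewrite !mulmxA -[w *m w^T *m w]mulmxA ww mul_mx_scalar -!scalemxAl scalerA.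
  have -> : 2 / c * (2 / c) * c = 2 / c + 2 / c by field.
  by rewrite scalerDl opprB addrK subrK.
rewrite /Q mulmxBl mul1mx -scalemxAl -mulmxA.
have -> : w^T *m e = (u 0 0 - 1)%:M.
  by rewrite [LHS]mx11_scalar -[(w^T *m e) 0 0]/(dot w e) /w dotBl ue dot_delta1.
rewrite mul_mx_scalar scalerA.
have -> : 2 / c * (u 0 0 - 1) = -1.
  by rewrite cE; field; move: c_neq0; rewrite cE.
by rewrite scaleN1r opprK /w addrC subrK.
Qed.

Lemma sym_deflate m (B : 'M[R]_(1 + m)) (a : R) :
  B^T = B -> B *m delta_mx 0 (0 : 'I_1) = a *: delta_mx 0 0 ->
  B = block_mx a%:M 0 0 (drsubmx B).
Proof.
move=> sB Be.
have Bi0 i : B i 0 = a * (i == 0)%:R.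
  by have := congr1 (fun M : 'cV_(1 + m) => M i 0) Be; rewrite -colE !mxE eqxx andbT.
have lshift0 : lshift m (0 : 'I_1) = 0 by apply: val_inj.
rewrite -[LHS](submxK B); congr block_mx; apply/matrixP => i j.
- by rewrite !ord1 !mxE lshift0 Bi0 eqxx mulr1.
- by rewrite !mxE -sB mxE !ord1 lshift0 Bi0 mulr0.
- by rewrite !mxE !ord1 lshift0 Bi0 mulr0.
Qed.

Lemma spectral m (A : 'M[R]_m) : A^T = A ->
  exists (V : 'M[R]_m) (d : 'rV[R]_m), V^T *m V = 1%:M /\ A = V *m diag_mx d *m V^T.
Proof.
elim: m A => [|m IH] A sA.
  by exists 1%:M, 0; rewrite trmx1 mulmx1; split => //; apply/matrixP => [[]].
have [a [u uu Au]] := sym_unit_eigenvector sA.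
have [Q [QQ Qe]] := householder uu.
pose B : 'M_(1 + m) := Q^T *m A *m Q.
have sB : B^T = B by rewrite /B !trmx_mul trmxK sA mulmxA.
have BE : B = block_mx a%:M 0 0 (drsubmx B).
  apply: sym_deflate sB _.
  by rewrite /B -!mulmxA Qe Au -scalemxAr -Qe mulmxA QQ mul1mx.
have AE : A = Q *m B *m Q^T.
  by rewrite /B !mulmxA (mulmx1C QQ) mul1mx -mulmxA (mulmx1C QQ) mulmx1.
clearbody B.
have sB' : (drsubmx B)^T = drsubmx B by rewrite trmx_drsub sB.
have [V' [d' [VV' B'E]]] := IH _ sB'.
pose W : 'M_(1 + m) := block_mx 1%:M 0 0 V'.
have WT : W^T = block_mx 1%:M 0 0 V'^T by rewrite /W tr_block_mx !trmx0 trmx1.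
exists (Q *m W), (row_mx a%:M d'); split.
  rewrite trmx_mul mulmxA -(mulmxA W^T) QQ mulmx1 WT /W (@mulmx_block _ 1 m 1 m 1 m).
  by rewrite !mulmx0 !mul0mx !mulmx1 !addr0 !add0r VV' -scalar_mx_block.
have diag1 : diag_mx (a%:M : 'rV[R]_1) = a%:M.
  by apply/matrixP => i j; rewrite !ord1 !mxE eqxx.
rewrite AE trmx_mul !mulmxA; congr (_ *m _); rewrite -!mulmxA; congr (_ *m _).
rewrite BE (@diag_mx_row _ m 1) diag1 WT /W !(@mulmx_block _ 1 m 1 m 1 m) B'E.
by rewrite !mulmx0 !mul0mx !mulmx1 !mul1mx !addr0 !add0r mulmxA mulmx0.
Qed.

End Spectral.

Section OperatorNorm.
Variable R : rcfType.

Lemma vnormE m (x : 'cV[R]_m) : vnorm x = Num.sqrt (dot x x).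
Proof. by rewrite /vnorm dotE; congr Num.sqrt; apply: eq_bigr => i _; rewrite expr2. Qed.

(* The 2-norm exists: it is the square root of the largest eigenvalue of M^T M. *)
Lemma norm2_exists m (M : 'M[R]_m) : exists c, is_norm2 M c.
Proof.
have sMM : (M^T *m M)^T = M^T *m M by rewrite trmx_mul trmxK.
have [V [d [VV MME]]] := spectral sMM.
pose dm := \big[Num.max/0]_(i < m) d 0 i.
have dm_ge0 : 0 <= dm.
  by apply: (big_rec (fun z => 0 <= z)) => // i z _ z0; rewrite le_max z0 orbT.
have dm_max i : d 0 i <= dm by rewrite /dm (bigD1 i) //= le_max lexx.
have MxE x : dot (M *m x) (M *m x) = \sum_i d 0 i * (V^T *m x) i 0 ^+ 2.
  rewrite dotTr mulmxA MME -!mulmxA dotC dotTr dotE.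
  by apply: eq_bigr => i _; rewrite mul_diag_mx !mxE; ring.
have VTx x : dot (V^T *m x) (V^T *m x) = dot x x.
  by rewrite dot_orth // trmxK; apply: mulmx1C.
exists (Num.sqrt dm); split; first exact: sqrtr_ge0.
split.
  move=> x; rewrite !vnormE -sqrtrM // ler_wsqrtr // MxE -VTx dotE mulr_sumr.
  by apply: ler_sum => i _; rewrite -expr2 ler_wpM2r ?sqr_ge0.
move=> c c_ge0 c_bound.
have [-> | [i ->]] : dm = 0 \/ exists i, dm = d 0 i.
- apply: (big_ind (fun z => z = 0 \/ exists i, z = d 0 i)) => [|u v Hu Hv|i _].
  + by left.
  + by rewrite maxEle; case: ifP.
  + by right; exists i.
- by rewrite sqrtr0.
have := c_bound (V *m delta_mx i 0).
rewrite !vnormE MxE dot_orth // dot_delta1 sqrtr1 mulr1 mulmxA VV mul1mx.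
rewrite (bigD1 i) //= big1 ?addr0; first by rewrite mxE !eqxx expr1n mulr1.
by move=> j /negbTE ji; rewrite mxE ji expr0n mulr0.
Qed.

Lemma norm2_spec m (M : 'M[R]_m) : is_norm2 M (norm2 M).
Proof. exact: epsilon_spec (norm2_exists M). Qed.

Lemma norm2_ge0 m (M : 'M[R]_m) : 0 <= norm2 M.
Proof. by case: (norm2_spec M). Qed.

Lemma norm2_bound m (M : 'M[R]_m) x :
  dot (M *m x) (M *m x) <= norm2 M ^+ 2 * dot x x.
Proof.
case: (norm2_spec M) => _ [Mbound _]; have := Mbound x; rewrite !vnormE.
have := sqr_sqrtr (dot_ge0 (M *m x)); have := sqr_sqrtr (dot_ge0 x).
have := sqrtr_ge0 (dot (M *m x) (M *m x)); have := sqrtr_ge0 (dot x x).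
set a := Num.sqrt _; set b := Num.sqrt _ => a0 b0 Ea Eb le_ba.
rewrite -Ea -Eb; nra.
Qed.

Lemma norm2_le m (N : 'M[R]_m) K : 0 <= K ->
  (forall x, dot (N *m x) (N *m x) <= K ^+ 2 * dot x x) -> norm2 N <= K.
Proof.
move=> K0 NK; case: (norm2_spec N) => _ [_ least]; apply: least => // x.
by rewrite !vnormE -[K]ger0_norm // -sqrtr_sqr -sqrtrM ?sqr_ge0 // ler_wsqrtr.
Qed.

Lemma quad_bound m (E : 'M[R]_m) y : `|dot y (E *m y)| <= norm2 E * dot y y.
Proof.
have le_cs := cs y (E *m y); have le_E := norm2_bound E y.
rewrite -ler_sqr ?nnegrE ?mulr_ge0 ?norm2_ge0 ?dot_ge0 // real_normK ?num_real //.
by apply: (le_trans le_cs); have := dot_ge0 y; nra.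
Qed.

Lemma norm2_psd_le m (N : 'M[R]_m) K : N^T = N -> psd_form N -> 0 <= K ->
  (forall z, dot z (N *m z) <= K * dot z z) -> norm2 N <= K.
Proof.
move=> sN psdN K0 NK; apply: norm2_le => // x.
set q := dot (N *m x) (N *m x).
have cs_x : q ^+ 2 <= dot x (N *m x) * dot (N *m x) (N *m (N *m x)).
  by have := cs_form x (N *m x) sN psdN; rewrite dotTr sN.
have q_le : q ^+ 2 <= K ^+ 2 * q * dot x x.
  apply: le_trans cs_x _.
  rewrite [X in _ <= X](_ : _ = (K * dot x x) * (K * q)); last by ring.
  exact: ler_pM (psdN _) (psdN _) (NK _) (NK _).
exact: sqr_le_cancel (dot_ge0 _) (sqr_ge0 K) (dot_ge0 x) q_le.
Qed.

End OperatorNorm.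

Section SPD.
Variable R : rcfType.

Lemma spd_psd m (X : 'M[R]_m) : spd X -> psd_form X.
Proof.
move=> [_ posX] z; have [-> | z_neq0] := eqVneq z 0.
  by rewrite mulmx0 dot_ge0.
by apply: ltW; rewrite /dot mulmxA; exact: posX.
Qed.

Lemma spd_decomp m (X : 'M[R]_m) : spd X ->
  exists (V : 'M[R]_m) (d : 'rV[R]_m),
    [/\ V^T *m V = 1%:M, X = V *m diag_mx d *m V^T & forall i, 0 < d 0 i].
Proof.
move=> [sX posX]; have [V [d [VV XE]]] := spectral sX.
exists V, d; split => // i; pose e : 'cV[R]_m := delta_mx i 0.
have Ve_neq0 : V *m e != 0.
  apply/eqP => Ve0; have := dot_orth e e VV.
  by rewrite Ve0 dot0r dot_delta1 => /eqP; rewrite eq_sym oner_eq0.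
have : 0 < dot (V *m e) (X *m (V *m e)) by rewrite /dot mulmxA; exact: posX.
rewrite XE -!mulmxA (mulmxA V^T) VV mul1mx dot_orth // dot_delta mul_diag_mx.
by rewrite !mxE !eqxx mulr1.
Qed.

Lemma spd_unit m (X : 'M[R]_m) : spd X -> X \in unitmx.
Proof.
move=> /spd_decomp [V [d [VV XE d_gt0]]].
pose Y := V *m diag_mx (\row_j (d 0 j)^-1) *m V^T.
suff XY : X *m Y = 1%:M by case/mulmx1_unit: XY.
rewrite XE /Y -!mulmxA (mulmxA V^T) VV mul1mx (mulmxA (diag_mx d)) mulmx_diag.
have -> : \row_j (d 0 j * (\row_j0 (d 0 j0)^-1) 0 j) = const_mx 1.
  by apply/rowP => j; rewrite !mxE mulfV // gt_eqF.
by rewrite diag_const_mx mul1mx (mulmx1C VV).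
Qed.

Lemma sqrtm_props m (X : 'M[R]_m) : spd X ->
  (sqrtm X)^T = sqrtm X /\ sqrtm X *m sqrtm X = X.
Proof.
move=> spdX; have [V [d [VV XE d_gt0]]] := spd_decomp spdX.
have : exists S, is_sqrtm X S.
  exists (V *m diag_mx (map_mx Num.sqrt d) *m V^T), V, d.
  by split => //; split => // i; apply: ltW.
move/(epsilon_spec (inhabits 0)); rewrite -/(sqrtm X).
move: (sqrtm X) => S [W [e [WW [e_ge0 [XE' SE]]]]].
split; first by rewrite SE !trmx_mul trmxK tr_diag_mx mulmxA.
rewrite SE XE' -!mulmxA (mulmxA W^T) WW mul1mx (mulmxA (diag_mx _)) mulmx_diag.
by congr (_ *m (diag_mx _ *m _)); apply/rowP => j; rewrite !mxE -expr2 sqr_sqrtr.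
Qed.

End SPD.

Section Perturbation.
Variable R : rcfType.
Variables (m l : nat) (A : 'M[R]_m).
Hypothesis spdA : spd A.

(* Cauchy-Schwarz in the A-inner product bounds the length of a projection. *)
Lemma proj_form_bound (P : 'M[R]_m) x : orth_proj P ->
  dot (P *m x) (P *m x) <= norm2 (P *m invmx A *m P) * dot x (A *m x).
Proof.
move=> [sP PP]; have [sA _] := spdA.
have AAi : A *m invmx A = 1%:M by rewrite mulmxV // spd_unit.
set y := P *m x; set u := invmx A *m y.
have Py : P *m y = y by rewrite /y mulmxA PP.
have Au : A *m u = y by rewrite /u mulmxA AAi mul1mx.
have yyE : dot y y = dot u (A *m x).
  by rewrite [RHS]dotTr sA Au {2}/y dotTr sP Py.
have uAuE : dot u (A *m u) = dot y ((P *m invmx A *m P) *m y).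
  by rewrite Au -!mulmxA Py -/u [RHS]dotTr sP Py dotC.
have le_cs := cs_form u x sA (spd_psd spdA).
rewrite -yyE uAuE in le_cs.
apply: sqr_le_cancel (dot_ge0 _) (norm2_ge0 _) (spd_psd spdA _) _.
apply: (le_trans le_cs); apply: ler_wpM2r; first exact: spd_psd.
exact: le_trans (ler_norm _) (quad_bound _ _).
Qed.

(* The form of the total perturbation is at most mu times the form of A
   (no symmetry of the E_k is needed for this). *)
Lemma perturbation_form_bound (E P : 'I_l -> 'M[R]_m) (mu : R) :
  (forall k, orth_proj (P k)) ->
  \sum_(k < l) norm2 (E k) * norm2 (P k *m invmx A *m P k) <= mu ->
  forall x, `|dot x ((\sum_(k < l) P k *m E k *m P k) *m x)| <= mu * dot x (A *m x).
Proof.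
move=> projP sum_le x; rewrite mulmx_suml dot_sumr.
apply: le_trans (ler_norm_sum _ _ _) _.
apply: (@le_trans _ _
  (\sum_(k < l) norm2 (E k) * norm2 (P k *m invmx A *m P k) * dot x (A *m x))).
  apply: ler_sum => k _; have [sP _] := projP k.
  have -> : dot x (P k *m E k *m P k *m x) = dot (P k *m x) (E k *m (P k *m x)).
    by rewrite -!mulmxA dotTr sP.
  rewrite -mulrA; apply: le_trans (quad_bound _ _) _.
  by apply: ler_wpM2l; [exact: norm2_ge0 | exact: proj_form_bound (projP k)].
by rewrite -mulr_suml; apply: ler_wpM2r => //; exact: spd_psd.
Qed.

End Perturbation.

Section Congruence.
Variable R : rcfType.
Variable m : nat.

Lemma spd_of_form_lower (A B : 'M[R]_m) (a : R) : B^T = B -> spd A -> 0 < a ->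
  (forall x, a * dot x (A *m x) <= dot x (B *m x)) -> spd B.
Proof.
move=> sB [_ posA] a_gt0 lo; split => // x x_neq0.
rewrite -mulmxA -/(dot _ _); apply: lt_le_trans (lo x).
by rewrite mulr_gt0 // /dot mulmxA posA.
Qed.

Lemma inv_psd (N : 'M[R]_m) : N \in unitmx -> psd_form N -> psd_form (invmx N).
Proof.
move=> Nu psdN x; set u := invmx N *m x.
have xE : x = N *m u by rewrite /u mulmxA mulmxV // mul1mx.
by rewrite {1}xE dotC psdN.
Qed.

Lemma inv_form_bound (N : 'M[R]_m) (b : R) : N \in unitmx -> psd_form N ->
  0 <= b -> (forall u, dot u u <= b * dot u (N *m u)) ->
  forall x, dot x (invmx N *m x) <= b * dot x x.
Proof.
move=> Nu psdN b0 lo x; set u := invmx N *m x.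
have xE : x = N *m u by rewrite /u mulmxA mulmxV // mul1mx.
suff : dot u (N *m u) <= b * dot (N *m u) (N *m u) by rewrite -xE dotC.
apply: sqr_le_cancel (psdN u) b0 (dot_ge0 _) _.
apply: le_trans (cs u (N *m u)) _.
by apply: ler_wpM2r; [exact: dot_ge0 | exact: lo].
Qed.

Lemma congruence_kappa_bound (A B : 'M[R]_m) (a b : R) :
  spd A -> spd B -> 0 < a -> 0 <= b ->
  (forall x, a * dot x (A *m x) <= dot x (B *m x)) ->
  (forall x, dot x (B *m x) <= b * dot x (A *m x)) ->
  kappa (isqrtm B *m A *m isqrtm B) <= b / a.
Proof.
move=> spdA spdB a_gt0 b_ge0 lo hi; have [sA _] := spdA.
have [sS SS] := sqrtm_props spdB; rewrite /isqrtm.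
set S := sqrtm B in sS SS *; set T := invmx S.
have Su : S \in unitmx.
  by move: (spd_unit spdB); rewrite -SS unitmx_mul => /andP[].
have sT : T^T = T by rewrite /T trmx_inv sS.
set N := T *m A *m T.
have sN : N^T = N by rewrite /N !trmx_mul sT sA mulmxA.
have Nu : N \in unitmx by rewrite /N !unitmx_mul unitmx_inv Su spd_unit.
(* The substitution x = T y transports the forms of A and B to N and 1. *)
have formN y : dot y (N *m y) = dot (T *m y) (A *m (T *m y)).
  by rewrite /N -!mulmxA [LHS]dotTr sT.
have formI y : dot y y = dot (T *m y) (B *m (T *m y)).
  by rewrite -SS -mulmxA dotTr sS (mulmxA S) mulmxV // mul1mx.
have psdN : psd_form N by move=> y; rewrite formN spd_psd.
have normN : norm2 N <= a^-1.
  apply: norm2_psd_le => //; first by rewrite invr_ge0 ltW.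
  by move=> y; rewrite formN formI ler_pdivlMl // lo.
have normNi : norm2 (invmx N) <= b.
  apply: norm2_psd_le => //; first by rewrite trmx_inv sN.
  - exact: inv_psd.
  - by apply: inv_form_bound => // y; rewrite formN formI hi.
rewrite /kappa -/N mulrC.
exact: ler_pM (norm2_ge0 _) (norm2_ge0 _) normNi normN.
Qed.

End Congruence.

Theorem mainTheorem3 (R : rcfType) (n l : nat) (A : 'M[R]_n)
    (E P : 'I_l -> 'M[R]_n) (mu : R) :
  spd A ->
  (forall k, symm_mx (E k)) ->
  (forall k, orth_proj (P k)) ->
  \sum_(k < l) norm2 (E k) * norm2 (P k *m invmx A *m P k) <= mu ->
  mu < 1 ->
  let Al := A + \sum_(k < l) P k *m E k *m P k in
  spd Al /\ kappa (isqrtm Al *m A *m isqrtm Al) <= (1 + mu) / (1 - mu).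
Proof.
move=> spdA symE projP sum_le mu_lt1 Al.
have mu_ge0 : 0 <= mu.
  by apply: le_trans sum_le; apply: sumr_ge0 => k _; rewrite mulr_ge0 ?norm2_ge0.
have formAl x : `|dot x (Al *m x) - dot x (A *m x)| <= mu * dot x (A *m x).
  by rewrite /Al mulmxDl dotDr addrC addKr; exact: perturbation_form_bound.
have lo x : (1 - mu) * dot x (A *m x) <= dot x (Al *m x).
  by have /ler_normlP[+ _] := formAl x; lra.
have hi x : dot x (Al *m x) <= (1 + mu) * dot x (A *m x).
  by have /ler_normlP[_] := formAl x; lra.
have symAl : Al^T = Al.
  have [sA _] := spdA; rewrite /Al linearD /= sA linear_sum /=.
  congr (_ + _); apply: eq_bigr => k _; have [sP _] := projP k.
  by rewrite !trmx_mul sP (symE k) mulmxA.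
have spdAl : spd Al by apply: spd_of_form_lower symAl spdA _ lo; rewrite subr_gt0.
split => //; apply: congruence_kappa_bound => //; first by rewrite subr_gt0.
by rewrite addr_ge0.
Qed.
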